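(* Let $n\ge2$ (prime or composite), $d\ge1$, $\alpha>1$, positive weights $\boldsymbol\gamma=\{\gamma_u\}$ with $\gamma_\emptyset=1$, $M>0$, and $\mathbf z\in\mathbb Z^d$. Then $$\Sigma_T\le M\,|\mathcal A_d(M)|\,S_{n,d,\alpha,\boldsymbol\gamma}(\mathbf z).$$ Moreover, if $\alpha>2$ then $$\Sigma_T\le M\,\big[S_{n,d,\alpha/2,\sqrt{\boldsymbol\gamma}}(\mathbf z)\big]^2.$$
   Context: Weights $\gamma_u>0$ for finite $u\subset\mathbb N$, $\gamma_\emptyset=1$; $\sqrt{\boldsymbol\gamma}$ denotes the weights $\{\gamma_u^{1/2}\}$. For smoothness $a>0$ and weights $\boldsymbol\beta$, and $\mathbf h\in\mathbb Z^d$: $\mathrm{supp}(\mathbf h)=\{j:h_j\ne0\}$, $r_{d,a,\boldsymbol\beta}(\mathbf h)=\beta_{\mathrm{supp}(\mathbf h)}^{-1}\prod_{j\in\mathrm{supp}(\mathbf h)}|h_j|^a$; write $r=r_{d,\alpha,\boldsymbol\gamma}$. $\mathcal A_d(M)=\{\mathbf h\in\mathbb Z^d:r(\mathbf h)\le M\}$. $$S_{n,d,a,\boldsymbol\beta}(\mathbf z)=\sum_{\mathbf h\in\mathbb Z^d}\frac1{r_{d,a,\boldsymbol\beta}(\mathbf h)}\sum_{\substack{\boldsymbol\ell\in\mathbb Z^d\setminus\{\mathbf0\}\\ \boldsymbol\ell\cdot\mathbf z\equiv0\ (\mathrm{mod}\ n)}}\frac1{r_{d,a,\boldsymbol\beta}(\mathbf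 h+\boldsymbol\ell)},$$ $$\Sigma_T:=\sum_{\mathbf h\in\mathcal A_d(M)}\sum_{\substack{\mathbf p\in\mathcal A_d(M)\\(\mathbf p-\mathbf h)\cdot\mathbf z\equiv0\ (\mathrm{mod}\ n)}}\sum_{\substack{\boldsymbol\ell\in\mathbb Z^d\setminus\{\mathbf0,\mathbf p-\mathbf h\}\\ \boldsymbol\ell\cdot\mathbf z\equiv0\ (\mathrm{mod}\ n)}}\frac1{r(\mathbf h+\boldsymbol\ell)}.$$ *)

From mathcomp Require Import all_boot all_order all_algebra.
From mathcomp Require Import all_classical all_reals all_analysis.
Set Implicit Arguments. Unset Strict Implicit. Unset Printing Implicit Defensive.
Import Order.TTheory GRing.Theory Num.Theory.
Local Open Scope classical_set_scope.
Local Open Scope ring_scope.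

(* lattice points of Z^d are row vectors 'rV[int]_d ; coordinate j is h ord0 j *)
Definition ivec (d : nat) := 'rV[int]_d.

Definition supp (d : nat) (h : ivec d) : {set 'I_d} := [set j | h ord0 j != 0].

(* r_{d,a,beta}(h) = beta_{supp h}^{-1} * prod_{j in supp h} |h_j|^a
   (weights beta_u only matter for u subset of {1..d}, here indexed by 'I_d) *)
Definition rfun (R : realType) (d : nat) (a : R) (beta : {set 'I_d} -> R)
    (h : ivec d) : R :=
  (beta (supp h))^-1 * \prod_(j in supp h) ((`|h ord0 j|%:~R : R) `^ a).

Definition dotz (d : nat) (l z : ivec d) : int := \sum_(j < d) l ord0 j * z ord0 j.

Definition congz (n : nat) (d : nat) (l z : ivec d) : Prop :=
  (dotz l z = 0 %[mod n%:Z])%Z.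

Definition Aset (R : realType) (d : nat) (alpha : R) (gamma : {set 'I_d} -> R)
    (M : R) : set (ivec d) := [set h | rfun alpha gamma h <= M].

Definition Sinner (R : realType) (n d : nat) (a : R) (beta : {set 'I_d} -> R)
    (z h : ivec d) : \bar R :=
  \esum_(l in [set l : ivec d | l != 0 /\ congz n l z])
     ((rfun a beta (h + l))^-1)%:E.

Definition Ssum (R : realType) (n d : nat) (a : R) (beta : {set 'I_d} -> R)
    (z : ivec d) : \bar R :=
  \esum_(h in [set: ivec d])
     (((rfun a beta h)^-1)%:E * Sinner n a beta z h)%E.

Definition SigmaT (R : realType) (n d : nat) (alpha : R)
    (gamma : {set 'I_d} -> R) (M : R) (z : ivec d) : \bar R :=
  \esum_(h in Aset alpha gamma M)
   \esum_(p in [set p | Aset alpha gamma M p /\ congz n (p - h) z])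
    \esum_(l in [set l : ivec d | l != 0 /\ l != p - h /\ congz n l z])
       ((rfun alpha gamma (h + l))^-1)%:E.

(* |A_d(M)| as a (possibly infinite) extended real: counting *)
Definition cardA (R : realType) (d : nat) (alpha : R) (gamma : {set 'I_d} -> R)
    (M : R) : \bar R :=
  \esum_(h in Aset alpha gamma M) (1%:E : \bar R).

From mathcomp Require Import all_boot all_order all_algebra.
From mathcomp Require Import all_classical all_reals all_analysis.
From mathcomp Require Import ring.
Set Implicit Arguments. Unset Strict Implicit. Unset Printing Implicit Defensive.
Import Order.TTheory GRing.Theory Num.Theory.
Local Open Scope classical_set_scope.
Local Open Scope ring_scope.

(* Both bounds start from 1 <= M / r(h) for h in A_d(M).  For the first, drop
   the constraints l <> p - h and (p - h).z = 0 (mod n): every p in A_d(M) then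
   contributes the same inner sum, and the outer sum is weighted by
   M / r(h) >= 1.  For the second, write 1/r(h + l) = w(h + l)^2 with
   w = 1/r_{d,alpha/2,sqrt gamma}; since also 1 <= M w(h)^2 and 1 <= M w(p)^2,
   1/r(h + l) <= M [w(h) w(h + l)] [w(h + l) w(p)].  The map
   (h, p, l) |-> ((h, l), (h + l, p - h - l)) is injective and sends the index
   set of Sigma_T into pairs of index pairs of S_{n,d,alpha/2,sqrt gamma}(z),
   whose double sum is the square of that sum. *)

Section ExtendedSums.
Variables (R : realType) (T : choiceType).
Local Open Scope ereal_scope.

Lemma esumZl_le (I : set T) (c : \bar R) (a : T -> \bar R) :
  0 <= c -> (forall i, I i -> 0 <= a i) ->
  \esum_(i in I) (c * a i) <= c * \esum_(i in I) a i.
Proof.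
move=> c0 a0; rewrite ge_ereal_sup => //= _ [X [finX XI]] <-.
rewrite fsbig_finite// big_seq -ge0_sume_distrr; last first.
  by move=> i; rewrite in_fset_set// inE => /XI/a0.
apply: lee_wpmul2l => //; rewrite -big_seq -fsbig_finite//.
by apply: ereal_sup_ubound; exists X.
Qed.

Lemma le_esum_subset (I J : set T) (a : T -> \bar R) :
  I `<=` J -> \esum_(i in I) a i <= \esum_(i in J) a i.
Proof.
move=> IJ; rewrite ge_ereal_sup => //= _ [X [finX XI]] <-.
by apply: esum_ge; exists X => //; split => //; exact: subset_trans IJ.
Qed.

Lemma esum_setX_mul_le (I J : set T) (a b : T -> \bar R) :
  (forall i, I i -> 0 <= a i) -> (forall j, J j -> 0 <= b j) ->
  \esum_(k in I `*`` fun=> J) (a k.1 * b k.2) <=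
    (\esum_(i in I) a i) * \esum_(j in J) b j.
Proof.
move=> a0 b0; rewrite -(esum_esum (a := fun i j => a i * b j)); last first.
  by move=> i j Ii Jj; rewrite mule_ge0 ?a0 ?b0.
apply: (@le_trans _ _ (\esum_(i in I) ((\esum_(j in J) b j) * a i))).
  apply: le_esum => i Ii; rewrite [leRHS]muleC.
  by apply: esumZl_le => [|j Jj]; [exact: a0 | exact: b0].
rewrite [leRHS]muleC; apply: esumZl_le => [|i Ii]; [exact: esum_ge0 | exact: a0].
Qed.

End ExtendedSums.

Arguments le_esum_subset {R T I J a}.

Lemma mul_sqr_ge1 (R : realDomainType) (M x y : R) :
  0 <= M -> 0 <= x -> 0 <= y ->
  1 <= M * x ^+ 2 -> 1 <= M * y ^+ 2 -> 1 <= M * (x * y).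
Proof.
move=> M0 x0 y0 Mx My; rewrite -(@expr_ge1 _ 2) ?mulr_ge0//.
have -> : (M * (x * y)) ^+ 2 = (M * x ^+ 2) * (M * y ^+ 2) by ring.
exact: mulr_ege1.
Qed.

Lemma rfun_gt0 (R : realType) d (a : R) (beta : {set 'I_d} -> R) (h : ivec d) :
  (forall u, 0 < beta u) -> 0 < rfun a beta h.
Proof.
move=> beta_gt0; rewrite /rfun mulr_gt0 ?invr_gt0//.
apply: prodr_gt0 => j; rewrite inE => hj; apply: powR_gt0.
by rewrite ltr0z normr_gt0.
Qed.

Lemma rfun_half_sqrt (R : realType) d (a : R) (beta : {set 'I_d} -> R)
    (h : ivec d) :
  (forall u, 0 < beta u) ->
  rfun (a / 2) (fun u => Num.sqrt (beta u)) h ^+ 2 = rfun a beta h.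
Proof.
move=> beta_gt0; rewrite /rfun exprMn exprVn sqr_sqrtr ?ltW//; congr (_ * _).
rewrite -prodrXl; apply: eq_bigr => j _.
by rewrite -powR_mulrn ?powR_ge0// -powRrM divfK.
Qed.

Lemma congzB n d (a b z : ivec d) :
  congz n a z -> congz n b z -> congz n (a - b) z.
Proof.
have dotzB : dotz (a - b) z = dotz a z - dotz b z.
  by rewrite /dotz -sumrB; apply: eq_bigr => j _; rewrite !mxE mulrBl.
rewrite /congz mod0z dotzB => /dvdz_mod0P za /dvdz_mod0P zb.
by apply/dvdz_mod0P; rewrite rpredB.
Qed.

Definition split_triple {d} (q : ivec d * (ivec d * ivec d)) :
    (ivec d * ivec d) * (ivec d * ivec d) :=
  ((q.1, q.2.2), (q.1 + q.2.2, q.2.1 - q.1 - q.2.2)).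

Lemma split_triple_inj d : injective (@split_triple d).
Proof. by move=> [h [p l]] [h' [p' l']] [-> -> _ /addIr/addIr ->]. Qed.

Section LatticeSums.
Variables (R : realType) (n d : nat) (alpha M : R) (gamma : {set 'I_d} -> R).
Variable z : ivec d.
Hypotheses (gamma_gt0 : forall u, 0 < gamma u) (M_gt0 : 0 < M).

Local Notation A := (Aset alpha gamma M).
Local Notation r := (rfun alpha gamma).
Local Notation w x := (rfun (alpha / 2) (fun u => Num.sqrt (gamma u)) x)^-1.
Local Notation dual_nz := [set l : ivec d | l != 0 /\ congz n l z].

Let M_ge0 : (0 <= M%:E)%E. Proof. by rewrite lee_fin ltW. Qed.

Lemma inv_rfun_ge0 x : 0 <= (r x)^-1.
Proof. by rewrite invr_ge0 ltW// rfun_gt0. Qed.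

Lemma Aset_inv_rfun_ge1 h : A h -> 1 <= M * (r h)^-1.
Proof. by move=> Ah; rewrite ler_pdivlMr ?rfun_gt0// mul1r. Qed.

Lemma Sinner_ge0 h : (0 <= Sinner n alpha gamma z h)%E.
Proof. by apply: esum_ge0 => l _; rewrite lee_fin inv_rfun_ge0. Qed.

Lemma SigmaT_le_cardA_esum_Sinner :
  (SigmaT n alpha gamma M z <=
     cardA alpha gamma M * \esum_(h in A) Sinner n alpha gamma z h)%E.
Proof.
have cardA_ge0 : (0 <= cardA alpha gamma M)%E by exact: esum_ge0.
apply: le_trans _ (esumZl_le cardA_ge0 (fun h _ => Sinner_ge0 h)).
apply: le_esum => h _; rewrite muleC.
apply: (@le_trans _ _ (\esum_(p in [set p | A p /\ congz n (p - h)%R z])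
                         Sinner n alpha gamma z h)%E).
  apply: le_esum => p _.
  by apply: le_esum_subset => l [l_neq0 [_ zl]]; split.
apply: le_trans (le_esum_subset (J := A) _) _; first by move=> p [].
under eq_esum do rewrite -[Sinner _ _ _ _ _]mule1.
exact: esumZl_le (Sinner_ge0 h) _.
Qed.

Lemma esum_Sinner_le_Ssum :
  (\esum_(h in A) Sinner n alpha gamma z h <= M%:E * Ssum n alpha gamma z)%E.
Proof.
apply: (@le_trans _ _
    (\esum_(h in A) (M%:E * ((r h)^-1%:E * Sinner n alpha gamma z h)))%E).
  apply: le_esum => h Ah; rewrite muleA -EFinM -[leLHS]mul1e.
  by apply: lee_wpmul2r; [exact: Sinner_ge0 | rewrite lee_fin Aset_inv_rfun_ge1].
apply: le_trans (esumZl_le M_ge0 _) _ => [h _|].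
  by rewrite mule_ge0 ?Sinner_ge0// lee_fin inv_rfun_ge0.
by apply: lee_wpmul2l => //; exact: le_esum_subset.
Qed.

Lemma SigmaT_le_cardA_Ssum :
  (SigmaT n alpha gamma M z <=
     M%:E * cardA alpha gamma M * Ssum n alpha gamma z)%E.
Proof.
apply: (le_trans SigmaT_le_cardA_esum_Sinner).
rewrite -muleA muleCA; apply: lee_wpmul2l; first exact: esum_ge0.
exact: esum_Sinner_le_Ssum.
Qed.

Lemma w_gt0 x : 0 < w x.
Proof. by rewrite invr_gt0 rfun_gt0// => u; rewrite sqrtr_gt0. Qed.

Lemma inv_rfun_sqr x : (r x)^-1 = w x ^+ 2.
Proof. by rewrite exprVn rfun_half_sqrt. Qed.

Lemma inv_rfun_le_weights h p l : A h -> A p ->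
  (r (h + l))^-1 <= M * ((w h * w (h + l)) * (w (h + l) * w p)).
Proof.
move=> Ah Ap; have w_ge0 x : 0 <= w x by exact: ltW (w_gt0 x).
have M_whp : 1 <= M * (w h * w p).
  apply: mul_sqr_ge1; [exact: ltW | exact: w_ge0 | exact: w_ge0 | |];
    by rewrite -inv_rfun_sqr Aset_inv_rfun_ge1.
rewrite inv_rfun_sqr.
have -> : M * ((w h * w (h + l)) * (w (h + l) * w p)) =
          M * (w h * w p) * w (h + l) ^+ 2 by ring.
by rewrite ler_peMl ?sqr_ge0.
Qed.

Local Notation pairs := ([set: ivec d] `*`` fun=> dual_nz).

Definition pair_weight (x : ivec d * ivec d) : \bar R :=
  (w x.1 * w (x.1 + x.2))%:E.

Lemma pair_weight_ge0 x : (0 <= pair_weight x)%E.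
Proof. by rewrite lee_fin mulr_ge0 ?ltW ?w_gt0. Qed.

Lemma esum_pair_weight_le_Ssum :
  (\esum_(x in pairs) pair_weight x <=
     Ssum n (alpha / 2) (fun u => Num.sqrt (gamma u)) z)%E.
Proof.
rewrite -(esum_esum (a := fun h l => pair_weight (h, l))); last first.
  by move=> h l _ _; exact: pair_weight_ge0.
apply: le_esum => h _; rewrite /pair_weight /Sinner /=.
under eq_esum do rewrite EFinM.
by apply: esumZl_le => [|l _]; rewrite lee_fin ltW ?w_gt0.
Qed.

Definition triples : set (ivec d * (ivec d * ivec d)) :=
  A `*`` (fun h => [set p | A p /\ congz n (p - h) z] `*``
    (fun p => [set l : ivec d | l != 0 /\ l != p - h /\ congz n l z])).

Lemma SigmaT_triples :
  SigmaT n alpha gamma M z = \esum_(q in triples) ((r (q.1 + q.2.2))^-1)%:E.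
Proof.
have F_ge0 x : (0 <= ((r x)^-1)%:E)%E by rewrite lee_fin inv_rfun_ge0.
rewrite /SigmaT.
under eq_esum => h _ do (rewrite esum_esum; last by move=> *; exact: F_ge0).
by rewrite esum_esum // => *; exact: F_ge0.
Qed.

Lemma split_triple_sub : split_triple @` triples `<=` pairs `*`` fun=> pairs.
Proof.
move=> _ [[h [p l]] [_ [[_ zph] [l_neq0 [l_neq_ph zl]]]] <-].
split; split=> //=; split; last exact: congzB.
by apply: contra l_neq_ph => /eqP/subr0_eq ->.
Qed.

Lemma SigmaT_le_pair_weights :
  (SigmaT n alpha gamma M z <=
     M%:E * \esum_(y in pairs `*`` fun=> pairs)
              (pair_weight y.1 * pair_weight y.2))%E.
Proof.
pose W y := (pair_weight y.1 * pair_weight y.2)%E.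
rewrite SigmaT_triples.
apply: (@le_trans _ _ (\esum_(q in triples) (M%:E * W (split_triple q)))%E).
  apply: le_esum => -[h [p l]] [/= Ah [[Ap _] _]].
  rewrite /W /pair_weight /= -!EFinM lee_fin.
  have -> : h + l + (p - h - l) = p by rewrite -[p - h - l]addrA -opprD subrKC.
  exact: inv_rfun_le_weights.
apply: le_trans (esumZl_le M_ge0 _) _ => [q _|].
  by rewrite mule_ge0 ?pair_weight_ge0.
apply: lee_wpmul2l => //; rewrite -(esum_image _ _ W).
  exact: le_esum_subset split_triple_sub.
exact: in2W (@split_triple_inj d).
Qed.

Lemma SigmaT_le_Ssum_half_sqrt :
  (SigmaT n alpha gamma M z <=
     M%:E * Ssum n (alpha / 2) (fun u => Num.sqrt (gamma u)) z ^+ 2)%E.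
Proof.
have pairs_ge0 : (0 <= \esum_(x in pairs) pair_weight x)%E.
  by apply: esum_ge0 => x _; exact: pair_weight_ge0.
apply: le_trans SigmaT_le_pair_weights _; apply: lee_wpmul2l => //.
apply: le_trans (esum_setX_mul_le (fun x _ => pair_weight_ge0 x)
                                  (fun x _ => pair_weight_ge0 x)) _.
rewrite -expe2 lee_sqr// ?esum_pair_weight_le_Ssum//.
exact: le_trans pairs_ge0 esum_pair_weight_le_Ssum.
Qed.

End LatticeSums.

Theorem lemma7 (R : realType) (n d : nat) (alpha M : R)
    (gamma : {set 'I_d} -> R) (z : ivec d) :
  (2 <= n)%N -> (1 <= d)%N -> 1 < alpha ->
  (forall u, 0 < gamma u) -> gamma finset.set0 = 1 -> 0 < M ->
  (SigmaT n alpha gamma M z <= M%:E * cardA alpha gamma M * Ssum n alpha gamma z)%E /\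
  (2 < alpha ->
   (SigmaT n alpha gamma M z <=
      M%:E * (Ssum n (alpha / 2) (fun u => Num.sqrt (gamma u)) z) ^+ 2)%E).
Proof.
move=> _ _ _ gamma_gt0 _ M_gt0; split; first exact: SigmaT_le_cardA_Ssum.
by move=> _; exact: SigmaT_le_Ssum_half_sqrt.
Qed.
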